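(* Let $a\ge0$ and, for $m\ge0$, set $\Omega(a,m)=\{b\ge0:\ \sup_{t\in\mathbb{R}}|\cos(ta)-\cos(tb)|\le m\}$. (i) If $m<2$, then $\Omega(a,m)$ is finite, and every $b\in\Omega(a,m)$ has the form $b=\frac{pa}{q}$ where $p,q$ are odd positive integers with $\gcd(p,q)=1$, $1\le p\le\frac{\pi}{\arccos(m-1)}$ and $1\le q\le\frac{\pi}{\arccos(m-1)}$. (ii) If $m<\frac{8}{3\sqrt3}$, then $\Omega(a,m)=\{a\}$. *)

From Stdlib Require Export Reals Lra Lia List Arith.
Open Scope R_scope.

Definition Omega (a m : R) (b : R) : Prop :=
  0 <= b /\ forall t : R, Rabs (cos (t * a) - cos (t * b)) <= m.

(** If b/a is irrational, the values of t b (mod 2π) at the times t with t a ∈ 2πℤ are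
    dense, so cos (t a) = 1 while cos (t b) comes arbitrarily close to -1 and the gap
    reaches 2. Hence b = p a / q with p, q coprime, and after rescaling time the
    condition reads |cos (q x) - cos (p x)| <= m for all x. At x = π this forces p and q
    to be odd. Choosing x = u π / p with u q ≡ 1 (mod 2p) and u odd gives cos (p x) = -1
    and cos (q x) = cos (π / p), so m >= 1 + cos (π / p), i.e. p <= π / arccos (m - 1);
    symmetrically for q. When m < 8/(3√3) < 1 + cos (π/4) only p, q ∈ {1, 3} survive,
    and {p, q} = {1, 3} is excluded because cos x - cos 3x = 8/(3√3) at
    x = arccos (1/√3). *)
From Stdlib Require Import ZArith ClassicalEpsilon.
Open Scope R_scope.

Lemma cos_period_Z (x : R) (k : Z) : cos (x + 2 * IZR k * PI) = cos x.
Proof.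
  destruct (Z_le_gt_dec 0 k) as [Hk | Hk].
  - rewrite <- (Z2Nat.id k Hk), <- INR_IZR_INZ. apply cos_period.
  - replace k with (- Z.of_nat (Z.to_nat (- k)))%Z by lia.
    rewrite opp_IZR, <- INR_IZR_INZ.
    rewrite <- (cos_period (x + 2 * - INR (Z.to_nat (- k)) * PI) (Z.to_nat (- k))).
    f_equal; ring.
Qed.

Lemma cos_even_mult_PI (n : nat) : Nat.Even n -> cos (INR n * PI) = 1.
Proof.
  intros [k ->].
  replace (INR (2 * k) * PI) with (0 + 2 * INR k * PI) by (rewrite mult_INR; simpl; ring).
  now rewrite cos_period, cos_0.
Qed.

Lemma cos_odd_mult_PI (n : nat) : Nat.Odd n -> cos (INR n * PI) = -1.
Proof.
  intros [k ->].
  replace (INR (2 * k + 1) * PI) with (PI + 2 * INR k * PI)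
    by (rewrite plus_INR, mult_INR; simpl; ring).
  now rewrite cos_period, cos_PI.
Qed.

Lemma cos_triple (x : R) : cos (3 * x) = 4 * cos x ^ 3 - 3 * cos x.
Proof.
  replace (3 * x) with (2 * x + x) by ring.
  rewrite cos_plus, cos_2a_cos, sin_2a.
  pose proof (sin2_cos2 x) as Hsc. unfold Rsqr in Hsc.
  replace (2 * sin x * cos x * sin x) with (2 * cos x * (sin x * sin x)) by ring.
  replace (sin x * sin x) with (1 - cos x * cos x) by lra.
  ring.
Qed.

Definition cos_gap_le (m u v : R) : Prop :=
  forall t, Rabs (cos (t * u) - cos (t * v)) <= m.

Lemma cos_gap_le_sym (m u v : R) : cos_gap_le m u v -> cos_gap_le m v u.
Proof. intros Hgap t. rewrite Rabs_minus_sym. apply Hgap. Qed.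

Lemma cos_gap_le_scale (m c u v : R) : cos_gap_le m u v -> cos_gap_le m (c * u) (c * v).
Proof. intros Hgap t. rewrite <- !Rmult_assoc. apply Hgap. Qed.

Lemma floor_mult (g y : R) : 0 < g -> exists z : Z, IZR z * g <= y < IZR z * g + g.
Proof.
  intros Hg. destruct (base_Int_part (y / g)) as [Hlo Hhi].
  exists (Int_part (y / g)).
  assert (Hy : y = y / g * g) by (field; lra).
  set (w := y / g) in *. rewrite Hy. split; nra.
Qed.

Lemma nonneg_set_inf (E : R -> Prop) :
  (exists x, E x) -> (forall x, E x -> 0 <= x) ->
  exists g, (forall x, E x -> g <= x) /\ (forall c, g < c -> exists x, E x /\ x < c).
Proof.
  intros [x0 Ex0] Hnonneg.
  destruct (completeness (fun y => E (- y))) as [L [Hub Hleast]].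
  - exists 0. intros y Ey. specialize (Hnonneg _ Ey). lra.
  - exists (- x0). now rewrite Ropp_involutive.
  - exists (- L). split.
    + intros x Ex. enough (- x <= L) by lra.
      apply Hub. now rewrite Ropp_involutive.
    + intros c Hc. apply NNPP. intros Hnone.
      enough (L <= - c) by lra.
      apply Hleast. intros y Ey. apply Rnot_lt_le. intros Hy.
      apply Hnone. exists (- y). split; [exact Ey | lra].
Qed.

Section IntegerCombinations.

Variable r : R.

Definition int_comb (x : R) : Prop := exists n k : Z, x = IZR n * r + IZR k.

Lemma int_comb_1 : int_comb 1.
Proof. exists 0%Z, 1%Z. simpl. ring. Qed.

Lemma int_comb_self : int_comb r.
Proof. exists 1%Z, 0%Z. simpl. ring. Qed.

Lemma int_comb_add (x y : R) : int_comb x -> int_comb y -> int_comb (x + y).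
Proof.
  intros [n [k ->]] [n' [k' ->]]. exists (n + n')%Z, (k + k')%Z.
  rewrite !plus_IZR. ring.
Qed.

Lemma int_comb_opp (x : R) : int_comb x -> int_comb (- x).
Proof.
  intros [n [k ->]]. exists (- n)%Z, (- k)%Z. rewrite !opp_IZR. ring.
Qed.

Lemma int_comb_Zmul (z : Z) (x : R) : int_comb x -> int_comb (IZR z * x).
Proof.
  intros [n [k ->]]. exists (z * n)%Z, (z * k)%Z. rewrite !mult_IZR. ring.
Qed.

Lemma int_comb_dense_of_small :
  (forall eps, 0 < eps -> exists x, int_comb x /\ 0 < x < eps) ->
  forall y eps, 0 < eps -> exists x, int_comb x /\ Rabs (x - y) < eps.
Proof.
  intros Hsmall y eps Heps.
  destruct (Hsmall eps Heps) as [x [Hx [Hx0 Hxe]]].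
  destruct (floor_mult x y Hx0) as [z Hz].
  exists (IZR z * x). split; [now apply int_comb_Zmul |].
  apply Rabs_def1; lra.
Qed.

Lemma rational_of_int_comb_least_pos (g : R) :
  int_comb g -> 0 < g -> (forall x, int_comb x -> 0 < x -> g <= x) ->
  exists N M : Z, (0 < N)%Z /\ r * IZR N = IZR M.
Proof.
  intros Hg Hg0 Hleast.
  assert (Hmult : forall w, int_comb w -> exists z : Z, w = IZR z * g).
  { intros w Hw. destruct (floor_mult g w Hg0) as [z Hz]. exists z.
    apply NNPP. intros Hne.
    enough (g <= w + - (IZR z * g)) by lra.
    apply Hleast; [| lra].
    apply int_comb_add, int_comb_opp, int_comb_Zmul; assumption. }
  destruct (Hmult 1 int_comb_1) as [N HN].
  destruct (Hmult r int_comb_self) as [M HM].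
  exists N, M. split.
  - apply lt_IZR. nra.
  - rewrite HM, Rmult_assoc, (Rmult_comm g), <- HN. ring.
Qed.

Lemma rational_or_int_comb_dense :
  (exists N M : Z, (0 < N)%Z /\ r * IZR N = IZR M) \/
  (forall y eps, 0 < eps -> exists x, int_comb x /\ Rabs (x - y) < eps).
Proof.
  destruct (nonneg_set_inf (fun x => int_comb x /\ 0 < x)) as [g [Hlow Hinf]].
  - exists 1. split; [exact int_comb_1 | lra].
  - intros x [_ Hx]. lra.
  - destruct (Rle_or_lt g 0) as [Hg | Hg].
    + right. apply int_comb_dense_of_small. intros eps Heps.
      destruct (Hinf eps) as [x [[Hx Hx0] Hxe]]; [lra |].
      exists x. auto.
    + left.
      destruct (Hinf (2 * g)) as [x [[Hx Hx0] Hx2g]]; [lra |].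
      (* the infimum is attained: otherwise two elements in (g, 2g) differ by less than g *)
      assert (Hxg : x = g).
      { apply Rle_antisym; [| now apply Hlow].
        apply Rnot_lt_le. intros Hgx.
        destruct (Hinf x Hgx) as [x' [[Hx' Hx'0] Hx'x]].
        assert (g <= x + - x') by (apply Hlow; split; [apply int_comb_add, int_comb_opp | lra]; assumption).
        assert (g <= x') by (now apply Hlow).
        lra. }
      subst x. apply (rational_of_int_comb_least_pos g Hx Hg).
      intros x Hx' Hx0'. now apply Hlow.
Qed.

End IntegerCombinations.

Lemma cos_gap_lt_2_rational (m a b : R) :
  0 < a -> m < 2 -> cos_gap_le m a b ->
  exists N M : Z, (0 < N)%Z /\ b * IZR N = a * IZR M.
Proof.
  intros Ha Hm Hgap.
  destruct (rational_or_int_comb_dense (b / a)) as [[N [M [HN HNM]]] | Hdense].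
  { exists N, M. split; [exact HN |]. rewrite <- HNM. field. lra. }
  exfalso.
  pose proof PI_RGT_0 as Hpi.
  pose proof (Rle_trans _ _ _ (Rabs_pos _) (Hgap 0)) as Hm0.
  set (th := acos (1 - m)).
  assert (Hth : 0 <= th < PI).
  { destruct (acos_bound (1 - m)) as [H0 Hpi']. fold th in H0, Hpi'. split; [exact H0 |].
    destruct Hpi' as [Hlt | Heq]; [exact Hlt | exfalso].
    assert (Hc : cos th = 1 - m) by (apply cos_acos; lra).
    rewrite Heq, cos_PI in Hc. lra. }
  (* aim at x ∈ (th/(2π), 1/2), so that 2πx ∈ (th, π) where cos < cos th = 1 - m *)
  destruct (Hdense ((th + PI) / (4 * PI)) ((PI - th) / (4 * PI))) as [x [[n [k Hx]] Hxy]].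
  { apply Rdiv_lt_0_compat; lra. }
  apply Rabs_def2 in Hxy.
  assert (Hy : (th + PI) / (4 * PI) * (4 * PI) = th + PI) by (field; lra).
  assert (He : (PI - th) / (4 * PI) * (4 * PI) = PI - th) by (field; lra).
  assert (Hcx : cos (2 * PI * x) < 1 - m).
  { rewrite <- (cos_acos (1 - m)) by lra. fold th.
    apply cos_decreasing_1; nra. }
  specialize (Hgap (2 * IZR n * PI / a)).
  replace (2 * IZR n * PI / a * a) with (0 + 2 * IZR n * PI) in Hgap by (field; lra).
  replace (2 * IZR n * PI / a * b) with (2 * PI * x + 2 * IZR (- k) * PI) in Hgap
    by (rewrite opp_IZR, Hx; field; lra).
  rewrite !cos_period_Z, cos_0, Rabs_right in Hgap; lra.
Qed.

Lemma nat_coprime_reduce (p0 q0 : nat) : (0 < q0)%nat ->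
  exists p q g : nat, (0 < g)%nat /\ p0 = (p * g)%nat /\ q0 = (q * g)%nat /\
    Nat.gcd p q = 1%nat.
Proof.
  intros Hq0.
  destruct (Nat.gcd_divide_l p0 q0) as [p Hp].
  destruct (Nat.gcd_divide_r p0 q0) as [q Hq].
  pose proof (Nat.gcd_div_gcd p0 q0 (Nat.gcd p0 q0)) as Hcop.
  remember (Nat.gcd p0 q0) as g eqn:Hg.
  assert (Hg0 : g <> 0%nat) by (intros H; subst g; apply Nat.gcd_eq_0 in H; lia).
  exists p, q, g. split; [lia |]. split; [exact Hp |]. split; [exact Hq |].
  specialize (Hcop Hg0 eq_refl).
  rewrite Hp, Hq, !Nat.div_mul in Hcop by exact Hg0. exact Hcop.
Qed.

Lemma real_ratio_coprime (a b : R) (N M : Z) :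
  0 < a -> 0 <= b -> (0 < N)%Z -> b * IZR N = a * IZR M ->
  exists p q : nat, (0 < q)%nat /\ Nat.gcd p q = 1%nat /\ b * INR q = a * INR p.
Proof.
  intros Ha Hb HN HNM.
  assert (HM : (0 <= M)%Z).
  { apply le_IZR. apply (Rmult_le_reg_l a); [exact Ha |].
    rewrite Rmult_0_r, <- HNM. apply Rmult_le_pos; [exact Hb | now apply IZR_le, Z.lt_le_incl]. }
  destruct (nat_coprime_reduce (Z.to_nat M) (Z.to_nat N)) as [p [q [g [Hg [Hp [Hq Hpq]]]]]];
    [lia |].
  exists p, q. split; [lia |]. split; [exact Hpq |].
  assert (HgR : 0 < INR g) by (apply lt_0_INR; exact Hg).
  apply (Rmult_eq_reg_r (INR g)); [| lra].
  rewrite !Rmult_assoc, <- !mult_INR, <- Hp, <- Hq, !INR_IZR_INZ, !Z2Nat.id by lia.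
  exact HNM.
Qed.

Lemma cos_gap_lt_2_odd (m : R) (p q : nat) :
  m < 2 -> Nat.gcd p q = 1%nat -> cos_gap_le m (INR q) (INR p) -> Nat.Odd p /\ Nat.Odd q.
Proof.
  intros Hm Hpq Hgap.
  pose proof (Hgap PI) as Hpi. rewrite !(Rmult_comm PI) in Hpi.
  destruct (Nat.Even_or_Odd p) as [Ep | Op], (Nat.Even_or_Odd q) as [Eq | Oq];
    auto; exfalso.
  - destruct Ep as [p' ->], Eq as [q' ->].
    rewrite Nat.gcd_mul_mono_l in Hpq. lia.
  - rewrite cos_odd_mult_PI, cos_even_mult_PI, Rabs_left in Hpi by (auto; lra). lra.
  - rewrite cos_even_mult_PI, cos_odd_mult_PI, Rabs_right in Hpi by (auto; lra). lra.
Qed.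

Lemma Omega_pos_coprime (a m b : R) : 0 < a -> m < 2 -> Omega a m b ->
  exists p q : nat, Nat.Odd p /\ Nat.Odd q /\ Nat.gcd p q = 1%nat /\
    b = INR p * a / INR q /\ cos_gap_le m (INR q) (INR p).
Proof.
  intros Ha Hm [Hb Hgap].
  destruct (cos_gap_lt_2_rational m a b Ha Hm Hgap) as [N [M [HN HNM]]].
  destruct (real_ratio_coprime a b N M Ha Hb HN HNM) as [p [q [Hq [Hpq Hbq]]]].
  assert (HqR : 0 < INR q) by (apply lt_0_INR; exact Hq).
  assert (Hgap' : cos_gap_le m (INR q) (INR p)).
  { pose proof (cos_gap_le_scale m (INR q / a) a b Hgap) as Hs.
    replace (INR q / a * a) with (INR q) in Hs by (field; lra).
    replace (INR q / a * b) with (INR p) in Hs; [exact Hs |].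
    replace (INR q / a * b) with (b * INR q / a) by (field; lra).
    rewrite Hbq. field. lra. }
  destruct (cos_gap_lt_2_odd m p q Hm Hpq Hgap') as [Op Oq].
  exists p, q. repeat split; auto.
  apply (Rmult_eq_reg_r (INR q)); [| lra].
  rewrite Hbq. field. lra.
Qed.

Lemma odd_coprime_bezout (p q : nat) : Nat.Odd q -> Nat.gcd p q = 1%nat ->
  exists u c : nat, Nat.Odd u /\ (u * q = 2 * c * p + 1)%nat.
Proof.
  intros Oq Hpq.
  assert (Hbez : exists u c : nat, (u * q = 2 * c * p + 1)%nat).
  { destruct Oq as [d Hd].
    destruct (Nat.gcd_bezout_pos q p) as [u [v Huv]]; [lia |].
    rewrite Nat.gcd_comm, Hpq in Huv.
    destruct (Nat.Even_or_Odd v) as [[c Hc] | [c Hc]].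
    - exists u, c. lia.
    - (* shift u by p to make the coefficient of p even *)
      exists (u + p)%nat, (c + d + 1)%nat.
      rewrite Nat.mul_add_distr_r, Huv. subst v q. ring. }
  destruct Hbez as [u [c Huc]]. exists u, c. split; [| exact Huc].
  destruct (Nat.Even_or_Odd u) as [[k Hk] | Ou]; [exfalso | exact Ou].
  subst u. rewrite <- !Nat.mul_assoc in Huc. lia.
Qed.

Lemma cos_gap_odd_coprime_lower (m : R) (p q : nat) :
  Nat.Odd p -> Nat.Odd q -> Nat.gcd p q = 1%nat ->
  cos_gap_le m (INR q) (INR p) -> 1 + cos (PI / INR p) <= m.
Proof.
  intros Op Oq Hpq Hgap.
  destruct (odd_coprime_bezout p q Oq Hpq) as [u [c [Ou Huq]]].
  assert (Hp : 0 < INR p) by (apply lt_0_INR; destruct Op; lia).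
  assert (Huq' : INR u * INR q = 2 * INR c * INR p + 1)
    by (rewrite <- mult_INR, Huq, plus_INR, !mult_INR; simpl; ring).
  specialize (Hgap (INR u * PI / INR p)).
  replace (INR u * PI / INR p * INR p) with (INR u * PI) in Hgap by (field; lra).
  replace (INR u * PI / INR p * INR q) with (PI / INR p + 2 * INR c * PI) in Hgap.
  2: { replace (INR u * PI / INR p * INR q) with (INR u * INR q * PI / INR p) by (field; lra).
       rewrite Huq'. field. lra. }
  rewrite cos_period, cos_odd_mult_PI in Hgap by exact Ou.
  pose proof (COS_bound (PI / INR p)).
  rewrite Rabs_right in Hgap; lra.
Qed.

Lemma le_PI_div_acos (m : R) (p : nat) :
  m < 2 -> (1 <= p)%nat -> 1 + cos (PI / INR p) <= m -> INR p <= PI / acos (m - 1).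
Proof.
  intros Hm Hp Hcos.
  pose proof PI_RGT_0 as Hpi.
  pose proof (COS_bound (PI / INR p)) as Hb.
  set (th := acos (m - 1)).
  assert (Hc : cos th = m - 1) by (apply cos_acos; lra).
  destruct (acos_bound (m - 1)) as [Hth0 HthPI]. fold th in Hth0, HthPI.
  assert (Hth : 0 < th).
  { destruct Hth0 as [Hlt | Heq]; [exact Hlt |].
    rewrite <- Heq, cos_0 in Hc. lra. }
  assert (HpR : 1 <= INR p) by (apply (le_INR 1); exact Hp).
  assert (Hpp : PI / INR p * INR p = PI) by (field; lra).
  assert (Hpp0 : 0 < PI / INR p) by (apply Rdiv_lt_0_compat; lra).
  assert (Hthp : th <= PI / INR p) by (apply cos_decr_0; nra).
  apply (Rmult_le_reg_r th); [exact Hth |].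
  replace (PI / th * th) with PI by (field; lra).
  nra.
Qed.

Lemma Omega_0 (m b : R) : m < 2 -> Omega 0 m b -> b = 0.
Proof.
  intros Hm [Hb Hgap]. apply NNPP. intros Hb0.
  specialize (Hgap (PI / b)).
  replace (PI / b * b) with PI in Hgap by (field; exact Hb0).
  rewrite Rmult_0_r, cos_0, cos_PI, Rabs_right in Hgap; lra.
Qed.

Lemma Omega_rational_form (a m b : R) : 0 <= a -> m < 2 -> Omega a m b ->
  exists p q : nat,
    Nat.Odd p /\ Nat.Odd q /\ Nat.gcd p q = 1%nat /\
    (1 <= p)%nat /\ INR p <= PI / acos (m - 1) /\
    (1 <= q)%nat /\ INR q <= PI / acos (m - 1) /\
    b = INR p * a / INR q.
Proof.
  intros Ha Hm Hb.
  destruct (Req_dec a 0) as [-> | Ha0].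
  - assert (Hm0 : 0 <= m) by exact (Rle_trans _ _ _ (Rabs_pos _) (proj2 Hb 0)).
    assert (H1 : INR 1 <= PI / acos (m - 1)).
    { apply le_PI_div_acos; [exact Hm | lia |]. simpl. rewrite Rdiv_1_r, cos_PI. lra. }
    rewrite (Omega_0 m b Hm Hb).
    exists 1%nat, 1%nat. repeat split; try lia; try exact H1.
    + exists 0%nat. reflexivity.
    + exists 0%nat. reflexivity.
    + simpl. field.
  - destruct (Omega_pos_coprime a m b ltac:(lra) Hm Hb) as [p [q [Op [Oq [Hpq [Hbpq Hgap]]]]]].
    assert (Hp1 : (1 <= p)%nat) by (destruct Op; lia).
    assert (Hq1 : (1 <= q)%nat) by (destruct Oq; lia).
    pose proof (cos_gap_odd_coprime_lower m p q Op Oq Hpq Hgap) as Hlp.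
    pose proof (cos_gap_odd_coprime_lower m q p Oq Op
                  ltac:(now rewrite Nat.gcd_comm) (cos_gap_le_sym m _ _ Hgap)) as Hlq.
    exists p, q. repeat split; auto using le_PI_div_acos.
Qed.

Lemma list_of_subset {A : Type} (P : A -> Prop) (L : list A) :
  (forall x, P x -> In x L) -> exists l, forall x, P x <-> In x l.
Proof.
  intros HL.
  exists (filter (fun x => if excluded_middle_informative (P x) then true else false) L).
  intros x. rewrite filter_In.
  destruct (excluded_middle_informative (P x)) as [Hx | Hx].
  - split; [intros H; split; auto | tauto].
  - split; [tauto | intros [_ H]; discriminate].
Qed.

Lemma Omega_finite (a m : R) : 0 <= a -> m < 2 ->
  exists l : list R, forall b, Omega a m b <-> In b l.
Proof.
  intros Ha Hm.
  destruct (INR_unbounded (PI / acos (m - 1))) as [K HK].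
  apply (list_of_subset _ (map (fun pq => INR (fst pq) * a / INR (snd pq))
                             (list_prod (seq 0 K) (seq 0 K)))).
  intros b Hb.
  destruct (Omega_rational_form a m b Ha Hm Hb)
    as [p [q [_ [_ [_ [_ [Hp [_ [Hq ->]]]]]]]]].
  apply in_map_iff. exists (p, q). split; [reflexivity |].
  apply in_prod; apply in_seq; split; try lia; apply INR_lt; simpl; lra.
Qed.

Lemma cos_gap_1_3 (m : R) : cos_gap_le m 1 3 -> 8 / (3 * sqrt 3) <= m.
Proof.
  intros Hgap.
  pose proof (sqrt_sqrt 3 ltac:(lra)) as Hs3. pose proof (sqrt_pos 3) as Hs0.
  set (s := sqrt 3) in *.
  assert (Hs : 1.7 < s) by nra.
  set (c := 1 / s).
  assert (Hc2 : c * c = 1 / 3) by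
    (unfold c; replace (1 / s * (1 / s)) with (1 / (s * s)) by (field; lra); rewrite Hs3; lra).
  assert (Hc0 : 0 < c) by (apply Rdiv_lt_0_compat; lra).
  assert (Hc1 : c <= 1) by nra.
  specialize (Hgap (acos c)).
  rewrite Rmult_1_r, (Rmult_comm _ 3), cos_triple, cos_acos in Hgap by lra.
  replace (c - (4 * c ^ 3 - 3 * c)) with (8 / (3 * s)) in Hgap.
  - rewrite Rabs_right in Hgap; [exact Hgap |]. left. apply Rdiv_lt_0_compat; lra.
  - replace (c ^ 3) with (c * (c * c)) by ring. rewrite Hc2. unfold c. field. lra.
Qed.

Lemma eight_div_3sqrt3_lt : 8 / (3 * sqrt 3) < 1 + cos (PI / 4).
Proof.
  rewrite cos_PI4.
  pose proof (sqrt_sqrt 3 ltac:(lra)) as Hs3. pose proof (sqrt_pos 3) as Hs3'.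
  pose proof (sqrt_sqrt 2 ltac:(lra)) as Hs2. pose proof (sqrt_pos 2) as Hs2'.
  assert (1.7 < sqrt 3) by nra. assert (sqrt 2 < 1.42) by nra.
  assert (8 / (3 * sqrt 3) * (3 * sqrt 3) = 8) by (field; lra).
  assert (1 / sqrt 2 * sqrt 2 = 1) by (field; nra).
  assert (8 / (3 * sqrt 3) < 1.57) by nra.
  assert (0.7 < 1 / sqrt 2) by nra.
  lra.
Qed.

Lemma cos_PI4_le_cos_PI_div (n : nat) : (4 <= n)%nat -> cos (PI / 4) <= cos (PI / INR n).
Proof.
  intros Hn.
  pose proof PI_RGT_0 as Hpi.
  assert (HnR : 4 <= INR n) by (apply (le_INR 4) in Hn; simpl in Hn; lra).
  assert (PI / INR n * INR n = PI) by (field; lra).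
  assert (0 < PI / INR n) by (apply Rdiv_lt_0_compat; lra).
  apply cos_decr_1; nra.
Qed.

Lemma odd_coprime_small_gap (m : R) (p q : nat) :
  Nat.Odd p -> Nat.Odd q -> Nat.gcd p q = 1%nat -> cos_gap_le m (INR q) (INR p) ->
  m < 8 / (3 * sqrt 3) -> p = 1%nat /\ q = 1%nat.
Proof.
  intros Op Oq Hpq Hgap Hm.
  assert (Hsmall : forall n : nat, 1 + cos (PI / INR n) <= m -> (n < 4)%nat).
  { intros n Hn. destruct (Nat.lt_ge_cases n 4) as [Hlt | Hge]; [exact Hlt | exfalso].
    pose proof (cos_PI4_le_cos_PI_div n Hge). pose proof eight_div_3sqrt3_lt. lra. }
  pose proof (Hsmall p (cos_gap_odd_coprime_lower m p q Op Oq Hpq Hgap)) as Hp4.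
  pose proof (Hsmall q (cos_gap_odd_coprime_lower m q p Oq Op
                ltac:(now rewrite Nat.gcd_comm) (cos_gap_le_sym m _ _ Hgap))) as Hq4.
  destruct Op as [k ->], Oq as [j ->].
  assert (Hk : (k = 0 \/ k = 1)%nat) by lia. assert (Hj : (j = 0 \/ j = 1)%nat) by lia.
  destruct Hk as [-> | ->], Hj as [-> | ->]; simpl in *; try lia; exfalso.
  - apply (Rlt_not_le _ _ Hm), cos_gap_1_3, cos_gap_le_sym.
    replace 3 with (1 + 1 + 1) by ring. exact Hgap.
  - apply (Rlt_not_le _ _ Hm), cos_gap_1_3.
    replace 3 with (1 + 1 + 1) by ring. exact Hgap.
Qed.

Lemma Omega_small_eq (a m b : R) : 0 <= a -> m < 8 / (3 * sqrt 3) -> Omega a m b -> b = a.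
Proof.
  intros Ha Hm Hb.
  assert (Hm2 : m < 2).
  { pose proof eight_div_3sqrt3_lt. pose proof (COS_bound (PI / 4)). lra. }
  destruct (Req_dec a 0) as [-> | Ha0]; [exact (Omega_0 m b Hm2 Hb) |].
  destruct (Omega_pos_coprime a m b ltac:(lra) Hm2 Hb) as [p [q [Op [Oq [Hpq [-> Hgap]]]]]].
  destruct (odd_coprime_small_gap m p q Op Oq Hpq Hgap Hm) as [-> ->].
  simpl. field.
Qed.

Theorem lemma3p5 (a m : R) (ha : 0 <= a) (hm : 0 <= m) :
  (m < 2 ->
     (exists l : list R, forall b, Omega a m b <-> In b l) /\
     (forall b, Omega a m b ->
        exists p q : nat,
          Nat.Odd p /\ Nat.Odd q /\ Nat.gcd p q = 1%nat /\
          (1 <= p)%nat /\ INR p <= PI / acos (m - 1) /\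
          (1 <= q)%nat /\ INR q <= PI / acos (m - 1) /\
          b = INR p * a / INR q))
  /\
  (m < 8 / (3 * sqrt 3) -> forall b, Omega a m b <-> b = a).
Proof.
  split.
  - intros Hm. split.
    + exact (Omega_finite a m ha Hm).
    + intros b. exact (Omega_rational_form a m b ha Hm).
  - intros Hm b. split.
    + exact (Omega_small_eq a m b ha Hm).
    + intros ->. split; [exact ha |].
      intros t. rewrite Rminus_diag, Rabs_R0. exact hm.
Qed.
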